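(* The principle $\Diamond(\mathbb{N}^{\mathbb{N}}, =^\infty)$ implies $\mathfrak{a}_p = \aleph_1$.
   Context: For $f,g\in\mathbb{N}^{\mathbb{N}}$, $f =^\infty g$ means $\{n : f(n)=g(n)\}$ is infinite. A function $F : {}^{<\omega_1}2 \to \mathbb{N}^{\mathbb{N}}$ is Borel if for every $\delta<\omega_1$ its restriction to ${}^\delta 2$ is a Borel function. $\Diamond(\mathbb{N}^{\mathbb{N}},=^\infty)$ is the statement: for every Borel $F : {}^{<\omega_1}2\to\mathbb{N}^{\mathbb{N}}$ there is $G:\omega_1\to\mathbb{N}^{\mathbb{N}}$ such that for every $f:\omega_1\to 2$ the set $\{\delta<\omega_1 : F(f\upharpoonright\delta) =^\infty G(\delta)\}$ is stationary. A family $\mathcal{A}$ of permutations of $\mathbb{N}$ is almost disjoint if any two distinct members agree on only finitely many inputs; it is a maximal almost disjoint family of permutations if it is almost disjoint and not properly contained in another almost disjoint family of permutations. $\mathfrak{a}_p$ is the least cardinality of a maximal almost disjoint family of permutations. *)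

From Stdlib Require Import List.
Import ListNotations.

(* Such a structure is unique up to isomorphism. *)
Definition countable_type (X : Type) : Prop :=
  exists i : X -> nat, forall x y, i x = i y -> x = y.

Record is_omega1 (W : Type) (lt : W -> W -> Prop) : Prop := {
  om_irrefl : forall a, ~ lt a a;
  om_trans : forall a b c, lt a b -> lt b c -> lt a c;
  om_total : forall a b, lt a b \/ a = b \/ lt b a;
  om_wf : well_founded lt;
  om_uncountable : ~ countable_type W;
  om_segments_countable : forall a, countable_type {b : W | lt b a}
}.

Definition unbounded {W} (lt : W -> W -> Prop) (C : W -> Prop) : Prop :=
  forall a, exists c, C c /\ lt a c.

(* closed: every nonzero alpha with sup (C ∩ alpha) = alpha belongs to C *)
Definition closed {W} (lt : W -> W -> Prop) (C : W -> Prop) : Prop :=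
  forall a, (exists b, lt b a) ->
    (forall b, lt b a -> exists c, C c /\ lt b c /\ lt c a) -> C a.

Definition club {W} (lt : W -> W -> Prop) (C : W -> Prop) : Prop :=
  closed lt C /\ unbounded lt C.

Definition stationary {W} (lt : W -> W -> Prop) (S : W -> Prop) : Prop :=
  forall C, club lt C -> exists a, C a /\ S a.

Inductive borel {X : Type} (open : (X -> Prop) -> Prop) : (X -> Prop) -> Prop :=
  | borel_open : forall U, open U -> borel open U
  | borel_compl : forall A, borel open A -> borel open (fun x => ~ A x)
  | borel_union : forall A : nat -> X -> Prop,
      (forall n, borel open (A n)) -> borel open (fun x => exists n, A n x)
  | borel_ext : forall A B, borel open A -> (forall x, A x <-> B x) -> borel open B.

Definition open_cantor {I : Type} (U : (I -> bool) -> Prop) : Prop :=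
  forall s, U s -> exists l : list I,
    forall t, (forall i, In i l -> t i = s i) -> U t.

Definition open_baire (U : (nat -> nat) -> Prop) : Prop :=
  forall s, U s -> exists N : nat,
    forall t, (forall n, n < N -> t n = s n) -> U t.

Definition borel_fun {I : Type} (f : (I -> bool) -> (nat -> nat)) : Prop :=
  forall U, open_baire U -> borel (@open_cantor I) (fun s => U (f s)).

Definition inf_eq (f g : nat -> nat) : Prop :=
  forall N, exists n, N <= n /\ f n = g n.

(* A function F : 2^{<omega_1} -> N^N is given as a family indexed by
   delta < omega_1 of maps 2^delta -> N^N, with 2^delta = {b | b < delta} -> bool. *)
Definition diamond_Baire_infeq (W : Type) (lt : W -> W -> Prop) : Prop :=
  forall F : forall d : W, ({b : W | lt b d} -> bool) -> (nat -> nat),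
    (forall d, borel_fun (F d)) ->
    exists G : W -> (nat -> nat),
      forall f : W -> bool,
        stationary lt
          (fun d => inf_eq (F d (fun b => f (proj1_sig b))) (G d)).

Definition is_perm (p : nat -> nat) : Prop :=
  (forall x y, p x = p y -> x = y) /\ (forall y, exists x, p x = y).

Definition almost_disjoint (f g : nat -> nat) : Prop :=
  exists N, forall n, N <= n -> f n <> g n.

Definition ad_perm_family (A : (nat -> nat) -> Prop) : Prop :=
  (forall p, A p -> is_perm p) /\
  (forall p q, A p -> A q -> p <> q -> almost_disjoint p q).

Definition mad_perm_family (A : (nat -> nat) -> Prop) : Prop :=
  ad_perm_family A /\
  ~ (exists p, is_perm p /\ ~ A p /\ forall q, A q -> almost_disjoint p q).

(* a_p = aleph_1 : some MAD family of permutations has cardinality aleph_1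
   (= |W|), and every MAD family of permutations has cardinality >= aleph_1,
   i.e. is uncountable. *)
Definition a_p_eq_aleph1 (W : Type) : Prop :=
  (exists A, mad_perm_family A /\
     exists h : W -> (nat -> nat),
       (forall x y, h x = h y -> x = y) /\ (forall p, A p <-> exists w, h w = p)) /\
  (forall A, mad_perm_family A -> ~ countable_type {p : nat -> nat | A p}).

From Stdlib Require Import List Lia PeanoNat Classical ClassicalEpsilon
  FunctionalExtensionality FinFun Cantor.
Import ListNotations.

(* The lower bound holds outright: no countable almost disjoint family of
   permutations is maximal, since from an enumeration [r 0, r 1, ...] of it one builds,
   by finite partial injections, a permutation [diag] avoiding the graphs of
   [r 0, ..., r k] beyond stage [k] (lemma [countable_not_mad]).

   For the upper bound we build by recursion on omega_1 a family [perm_at d]: the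
   earlier permutations form a countable sequence [below d], and [perm_at d] is their
   diagonal permutation which, at stage [k], also tries to realise one of the pairs
   coded by [G d k], where [G] is the guess given by the diamond principle for a Borel
   map [guess_map].  That map reads from a bit sequence of length [d] a candidate
   permutation [Q] and a sequence [R], and returns [sample Q R k]: the graph of [Q] on
   [6k + 1] points where [Q] avoids [R 0, ..., R k].  If some permutation [q] were
   almost disjoint from every [perm_at d], code [q] and the family into one bit sequence;
   at a guessing point [d] closed under the coding, [G d k] is the sample of [q] for
   infinitely many [k], and the diagonal construction then makes [perm_at d] agree with
   [q] arbitrarily far out ([diag_meets_sample]), a contradiction ([no_extension]). *)

(* Least witness of a nonzero value of [h : nat -> nat] (0 if there is none);
   it is how the Borel map below reads numbers off a sequence of bits. *)
Lemma least_witness (P : nat -> Prop) :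
  (exists n, P n) -> exists n, P n /\ forall m, m < n -> ~ P m.
Proof.
  intros [n Hn]. induction n as [n IH] using (well_founded_induction Wf_nat.lt_wf).
  destruct (classic (exists m, m < n /\ P m)) as [[m [Hmn Hm]]|Hnone].
  - exact (IH m Hmn Hm).
  - exists n. split; [exact Hn|]. intros m Hmn Hm. apply Hnone. eauto.
Qed.

Definition mu (h : nat -> nat) : nat :=
  match excluded_middle_informative (exists n, h n <> 0) with
  | left H => proj1_sig (constructive_indefinite_description _ (least_witness _ H))
  | right _ => 0
  end.

Lemma mu_spec (h : nat -> nat) :
  (exists n, h n <> 0) -> h (mu h) <> 0 /\ forall m, m < mu h -> h m = 0.
Proof.
  intros H. unfold mu. destruct excluded_middle_informative as [H'|]; [|contradiction].
  destruct constructive_indefinite_description as [n [Hn Hmin]]; simpl.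
  split; [exact Hn|]. intros m Hm. apply NNPP. exact (Hmin m Hm).
Qed.

Lemma mu_none (h : nat -> nat) : ~ (exists n, h n <> 0) -> mu h = 0.
Proof.
  intros H. unfold mu. destruct excluded_middle_informative; [contradiction|reflexivity].
Qed.

Lemma mu_char (h : nat -> nat) (v : nat) :
  mu h = v <-> (h v <> 0 /\ forall m, m < v -> h m = 0) \/ (v = 0 /\ forall n, h n = 0).
Proof.
  destruct (classic (exists n, h n <> 0)) as [H|H].
  - destruct (mu_spec h H) as [Hval Hmin]. split.
    + intros <-. left. auto.
    + intros [[Hv Hbelow]|[_ Hzero]].
      * destruct (Nat.lt_trichotomy (mu h) v) as [E|[E|E]]; auto.
        -- exfalso. exact (Hval (Hbelow _ E)).
        -- exfalso. exact (Hv (Hmin _ E)).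
      * exfalso. destruct H as [n Hn]. exact (Hn (Hzero n)).
  - rewrite (mu_none h H). split.
    + intros <-. right. split; [reflexivity|]. intro n. apply NNPP. intro. apply H. eauto.
    + intros [[Hv _]|[<- _]]; [exfalso; eauto|reflexivity].
Qed.

Lemma mu_indicator (g : nat) : mu (fun m => if g =? m then 1 else 0) = g.
Proof.
  apply mu_char. left. split.
  - rewrite Nat.eqb_refl. discriminate.
  - intros m Hm. destruct (Nat.eqb_spec g m); [lia|reflexivity].
Qed.

Fixpoint enc (l : list (nat * nat)) : nat :=
  match l with
  | [] => 0
  | (a, b) :: l => S (to_nat (a, to_nat (b, enc l)))
  end.

(* [decf fuel x] decodes [x]; fuel [x] suffices since [length l <= enc l]. *)
Fixpoint decf (fuel x : nat) : list (nat * nat) :=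
  match fuel, x with
  | S fuel, S y =>
      let (a, z) := of_nat y in let (b, w) := of_nat z in (a, b) :: decf fuel w
  | _, _ => []
  end.

Definition dec (x : nat) : list (nat * nat) := decf x x.

Lemma enc_length (l : list (nat * nat)) : length l <= enc l.
Proof.
  induction l as [|[a b] l IH]; simpl; [lia|].
  pose proof (to_nat_non_decreasing b (enc l)).
  pose proof (to_nat_non_decreasing a (to_nat (b, enc l))). lia.
Qed.

Lemma decf_enc (l : list (nat * nat)) (fuel : nat) :
  length l <= fuel -> decf fuel (enc l) = l.
Proof.
  revert fuel. induction l as [|[a b] l IH]; intros [|fuel] Hf; simpl in Hf;
    try reflexivity; [lia|].
  cbn [enc decf]. rewrite !cancel_of_to, IH; [reflexivity|lia].
Qed.

Lemma dec_enc (l : list (nat * nat)) : dec (enc l) = l.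
Proof. apply decf_enc, enc_length. Qed.

Section BorelMaps.
Variable I : Type.

Notation Borel := (borel (@open_cantor I)).

Lemma borel_const (P : Prop) : Borel (fun _ => P).
Proof. apply borel_open. intros s Hs. exists nil. intros t _. exact Hs. Qed.

Lemma borel_Inter (A : nat -> (I -> bool) -> Prop) :
  (forall n, Borel (A n)) -> Borel (fun s => forall n, A n s).
Proof.
  intros HA. eapply borel_ext.
  - apply borel_compl, borel_union. intro n. apply borel_compl, HA.
  - intro s. split.
    + intros Hs n. apply NNPP. intro Hn. apply Hs. eauto.
    + intros Hs [n Hn]. exact (Hn (Hs n)).
Qed.

Lemma borel_or (A B : (I -> bool) -> Prop) :
  Borel A -> Borel B -> Borel (fun s => A s \/ B s).
Proof.
  intros HA HB. eapply borel_ext.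
  - apply (borel_union _ (fun n => match n with 0 => A | _ => B end)). intros [|n]; auto.
  - intro s. split.
    + intros [[|n] H]; auto.
    + intros [H|H]; [exists 0|exists 1]; exact H.
Qed.

Lemma borel_and (A B : (I -> bool) -> Prop) :
  Borel A -> Borel B -> Borel (fun s => A s /\ B s).
Proof.
  intros HA HB. eapply borel_ext.
  - apply borel_compl, (borel_or (fun s => ~ A s) (fun s => ~ B s)); apply borel_compl;
      assumption.
  - intro s. cbv beta. split.
    + intros H. split; apply NNPP; intro; apply H; auto.
    + intros [H1 H2] [H|H]; auto.
Qed.

Lemma borel_coord (i : I) (b : bool) : Borel (fun s => s i = b).
Proof. apply borel_open. intros s Hs. exists [i]. intros t Ht. rewrite Ht; simpl; auto. Qed.

Definition meas (phi : (I -> bool) -> nat) : Prop := forall v, Borel (fun s => phi s = v).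

Lemma meas_ext (phi psi : (I -> bool) -> nat) :
  meas phi -> (forall s, phi s = psi s) -> meas psi.
Proof. intros H E v. eapply borel_ext; [apply (H v)|]. intro s. cbv beta. rewrite E. tauto. Qed.

Lemma meas_const (c : nat) : meas (fun _ => c).
Proof. intro v. apply borel_const. Qed.

Lemma meas_coord (i : I) : meas (fun s => if s i then 1 else 0).
Proof.
  intro v. eapply borel_ext.
  - apply borel_or; apply borel_and;
      [apply (borel_coord i true)|apply (borel_const (1 = v))
      |apply (borel_coord i false)|apply (borel_const (0 = v))].
  - intro s. cbv beta. destruct (s i); intuition congruence.
Qed.

Lemma meas_subst (Phi : nat -> (I -> bool) -> nat) (psi : (I -> bool) -> nat) :
  (forall n, meas (Phi n)) -> meas psi -> meas (fun s => Phi (psi s) s).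
Proof.
  intros HPhi Hpsi v. eapply borel_ext.
  - apply (borel_union _ (fun n s => psi s = n /\ Phi n s = v)).
    intro n. apply borel_and; [apply Hpsi|apply HPhi].
  - intro s. split.
    + intros [n [<- H]]. exact H.
    + intros H. exists (psi s). auto.
Qed.

Lemma meas_fun2 (g : nat -> nat -> nat) (phi psi : (I -> bool) -> nat) :
  meas phi -> meas psi -> meas (fun s => g (phi s) (psi s)).
Proof.
  intros Hphi Hpsi. apply (meas_subst (fun a s => g a (psi s))); [|exact Hphi].
  intro a. apply (meas_subst (fun b s => g a b)); [|exact Hpsi].
  intro b. apply meas_const.
Qed.

Lemma meas_mu (phi : nat -> (I -> bool) -> nat) :
  (forall n, meas (phi n)) -> meas (fun s => mu (fun n => phi n s)).
Proof.
  intros H v. eapply borel_ext.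
  - apply (borel_or (fun s => phi v s <> 0 /\ forall m, m < v -> phi m s = 0)
                    (fun s => v = 0 /\ forall n, phi n s = 0)); apply borel_and.
    + apply borel_compl, H.
    + apply (borel_Inter (fun m s => m < v -> phi m s = 0)). intro m.
      destruct (classic (m < v)).
      * eapply borel_ext; [apply (H m 0)|]. intro; cbv beta; tauto.
      * eapply borel_ext; [apply (borel_const True)|]. intro; cbv beta; tauto.
    + apply (borel_const (v = 0)).
    + apply (borel_Inter (fun n s => phi n s = 0)). intro n. apply H.
  - intro s. cbv beta. rewrite mu_char. tauto.
Qed.

Lemma meas_forallb (b : nat -> (I -> bool) -> bool) (L : list nat) :
  (forall j, meas (fun s => if b j s then 1 else 0)) ->
  meas (fun s => if forallb (fun j => b j s) L then 1 else 0).
Proof.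
  intros H. induction L as [|x L IH]; simpl; [apply meas_const|].
  apply (meas_ext (fun s => (if b x s then 1 else 0) *
                            (if forallb (fun j => b j s) L then 1 else 0))).
  - apply (meas_fun2 Nat.mul); auto.
  - intro s. destruct (b x s), (forallb _ _); reflexivity.
Qed.

Lemma meas_enc (a b : nat -> (I -> bool) -> nat) (L : list nat) :
  (forall i, meas (a i)) -> (forall i, meas (b i)) ->
  meas (fun s => enc (map (fun i => (a i s, b i s)) L)).
Proof.
  intros Ha Hb. induction L as [|x L IH]; simpl; [apply meas_const|].
  apply (meas_fun2 (fun u v => S (to_nat (u, v)))); [apply Ha|].
  apply (meas_fun2 (fun u v => to_nat (u, v))); auto.
Qed.

Lemma borel_prefix (F : (I -> bool) -> nat -> nat) (N : nat) (Q : list nat -> Prop) :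
  (forall k, meas (fun s => F s k)) -> Borel (fun s => Q (map (F s) (seq 0 N))).
Proof.
  intros HF. revert Q. induction N as [|N IH]; intros Q; [apply (borel_const (Q []))|].
  eapply borel_ext.
  - apply (borel_union _ (fun v s => F s N = v /\ Q (map (F s) (seq 0 N) ++ [v]))).
    intro v. apply borel_and; [apply HF|apply (IH (fun l => Q (l ++ [v])))].
  - intro s. cbv beta. rewrite seq_S, map_app. simpl. split.
    + intros [v [<- H]]. exact H.
    + intros H. exists (F s N). auto.
Qed.

Lemma meas_borel_fun (F : (I -> bool) -> nat -> nat) :
  (forall k, meas (fun s => F s k)) -> borel_fun F.
Proof.
  intros HF U HU.
  assert (Hnth : forall s N n, n < N -> nth n (map (F s) (seq 0 N)) 0 = F s n).
  { intros s N n Hn. rewrite nth_indep with (d' := F s 0).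
    - rewrite map_nth, seq_nth; auto.
    - rewrite length_map, length_seq; exact Hn. }
  eapply borel_ext.
  - apply (borel_union _ (fun N s =>
      (fun l => forall t, (forall n, n < N -> t n = nth n l 0) -> U t) (map (F s) (seq 0 N)))).
    intro N.
    apply (borel_prefix F N (fun l => forall t, (forall n, n < N -> t n = nth n l 0) -> U t)), HF.
  - intro s. cbv beta. split.
    + intros [N HN]. apply HN. intros n Hn. rewrite Hnth; auto.
    + intros H. destruct (HU _ H) as [N HN]. exists N. intros t Ht. apply HN.
      intros n Hn. rewrite Ht, Hnth; auto.
Qed.

End BorelMaps.

Arguments meas {I}.

Definition mem (n : nat) (l : list nat) : bool := existsb (Nat.eqb n) l.

Lemma mem_In (n : nat) (l : list nat) : mem n l = true <-> In n l.
Proof.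
  unfold mem. rewrite existsb_exists. split.
  - intros [x [Hx E]]. apply Nat.eqb_eq in E. subst. exact Hx.
  - intros H. exists n. split; [exact H|apply Nat.eqb_refl].
Qed.

Lemma mem_nIn (n : nat) (l : list nat) : mem n l = false <-> ~ In n l.
Proof. rewrite <- mem_In. destruct (mem n l); split; intuition congruence. Qed.

Definition maxl (l : list nat) : nat := fold_right max 0 l.

Lemma maxl_ge (x : nat) (l : list nat) : In x l -> x <= maxl l.
Proof. induction l as [|y l IH]; simpl; [tauto|]. intros [<-|H]; [lia|]. specialize (IH H). lia. Qed.

Lemma fresh_not_in (l : list nat) : ~ In (S (maxl l)) l.
Proof. intro H. apply maxl_ge in H. lia. Qed.

Definition dom (P : list (nat * nat)) : list nat := map fst P.
Definition ran (P : list (nat * nat)) : list nat := map snd P.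

Definition pinj (P : list (nat * nat)) : Prop :=
  forall a b c d, In (a, b) P -> In (c, d) P -> (a = c <-> b = d).

Lemma in_dom (n m : nat) (P : list (nat * nat)) : In (n, m) P -> In n (dom P).
Proof. exact (in_map fst P (n, m)). Qed.

Lemma in_ran (n m : nat) (P : list (nat * nat)) : In (n, m) P -> In m (ran P).
Proof. exact (in_map snd P (n, m)). Qed.

Lemma pinj_cons (P : list (nat * nat)) (n m : nat) :
  pinj P -> ~ In n (dom P) -> ~ In m (ran P) -> pinj ((n, m) :: P).
Proof.
  intros HP Hn Hm a b c d [E1|E1] [E2|E2].
  - inversion E1; inversion E2; subst; tauto.
  - inversion E1; subst. split; intro; subst; [apply in_dom in E2|apply in_ran in E2]; tauto.
  - inversion E2; subst. split; intro; subst; [apply in_dom in E1|apply in_ran in E1]; tauto.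
  - apply HP; assumption.
Qed.

Definition lookup (n : nat) (P : list (nat * nat)) : nat :=
  match find (fun pr => fst pr =? n) P with Some pr => snd pr | None => 0 end.

Lemma lookup_spec (n m : nat) (P : list (nat * nat)) : pinj P -> In (n, m) P -> lookup n P = m.
Proof.
  intros HP H. unfold lookup.
  destruct (find (fun pr => fst pr =? n) P) as [[a b]|] eqn:E.
  - apply find_some in E as [E1 E2]. simpl in E2. apply Nat.eqb_eq in E2. subst.
    exact (proj1 (HP n b n m E1 H) eq_refl).
  - eapply find_none in E; [|exact H]. simpl in E. rewrite Nat.eqb_refl in E. discriminate.
Qed.

Definition perm_family (r ri : nat -> nat -> nat) : Prop :=
  forall j, (forall x y, r j x = r j y -> x = y) /\ (forall m, r j (ri j m) = m).

Definition avoidb (r : nat -> nat -> nat) (k n m : nat) : bool :=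
  forallb (fun j => negb (r j n =? m)) (seq 0 (S k)).

Lemma avoidb_spec (r : nat -> nat -> nat) (k n m : nat) :
  avoidb r k n m = true <-> forall j, j <= k -> r j n <> m.
Proof.
  unfold avoidb. rewrite forallb_forall. split.
  - intros H j Hj E. specialize (H j). rewrite in_seq, E, Nat.eqb_refl in H.
    discriminate (H ltac:(lia)).
  - intros H j Hj. rewrite in_seq in Hj.
    destruct (Nat.eqb_spec (r j n) m); [exfalso; apply (H j); [lia|assumption]|reflexivity].
Qed.

Definition fits (r : nat -> nat -> nat) (k : nat) (P : list (nat * nat)) (c : nat * nat) : bool :=
  negb (mem (fst c) (dom P)) && negb (mem (snd c) (ran P)) && (k <=? fst c)
  && avoidb r k (fst c) (snd c).

Lemma fits_spec (r : nat -> nat -> nat) (k : nat) (P : list (nat * nat)) (n m : nat) :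
  fits r k P (n, m) = true <->
  ~ In n (dom P) /\ ~ In m (ran P) /\ k <= n /\ forall j, j <= k -> r j n <> m.
Proof.
  unfold fits; simpl.
  rewrite !Bool.andb_true_iff, !Bool.negb_true_iff, !mem_nIn, Nat.leb_le, avoidb_spec. tauto.
Qed.

(* Stage [k] of the construction of a permutation almost disjoint from every [r j],
   which moreover realises, when possible, one of the pairs coded by [g k]:
   first add a fitting pair from [dec (g k)], then put [k] into the domain and into
   the range, with fresh values avoiding the graphs of [r 0, ..., r k]. *)
Definition add_requested (r : nat -> nat -> nat) (g : nat -> nat) (k : nat)
    (P : list (nat * nat)) : list (nat * nat) :=
  match find (fits r k P) (dec (g k)) with Some c => c :: P | None => P end.

Definition add_domain (r : nat -> nat -> nat) (k : nat) (P : list (nat * nat)) :=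
  if mem k (dom P) then P
  else (k, S (maxl (ran P ++ map (fun j => r j k) (seq 0 (S k))))) :: P.

Definition add_range (ri : nat -> nat -> nat) (k : nat) (P : list (nat * nat)) :=
  if mem k (ran P) then P
  else (S (maxl (dom P ++ map (fun j => ri j k) (seq 0 (S k)))), k) :: P.

Definition step (r ri : nat -> nat -> nat) (g : nat -> nat) (k : nat) (P : list (nat * nat)) :=
  add_range ri k (add_domain r k (add_requested r g k P)).

Fixpoint approx (r ri : nat -> nat -> nat) (g : nat -> nat) (k : nat) : list (nat * nat) :=
  match k with 0 => [] | S k => step r ri g k (approx r ri g k) end.

Definition diag (r ri : nat -> nat -> nat) (g : nat -> nat) (n : nat) : nat :=
  lookup n (approx r ri g (S n)).

Section Diagonal.
Variables (r ri : nat -> nat -> nat) (g : nat -> nat).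
Hypothesis Hr : perm_family r ri.

Lemma step_incl_requested (k : nat) (P : list (nat * nat)) (x : nat * nat) :
  In x (add_requested r g k P) -> In x (step r ri g k P).
Proof. intro H. unfold step, add_range, add_domain. repeat destruct (mem _ _); simpl; auto. Qed.

Lemma step_incl (k : nat) (P : list (nat * nat)) (x : nat * nat) : In x P -> In x (step r ri g k P).
Proof.
  intro H. apply step_incl_requested. unfold add_requested. destruct (find _ _); simpl; auto.
Qed.

Lemma approx_mono (k k' : nat) (x : nat * nat) :
  k <= k' -> In x (approx r ri g k) -> In x (approx r ri g k').
Proof. induction 1 as [|k' _ IH]; [auto|]. intro Hx. apply step_incl. auto. Qed.

Lemma step_pinj (k : nat) (P : list (nat * nat)) : pinj P -> pinj (step r ri g k P).
Proof.
  intros HP. unfold step, add_range, add_domain.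
  assert (H1 : pinj (add_requested r g k P)).
  { unfold add_requested. destruct (find _ _) as [[n m]|] eqn:E; [|exact HP].
    apply find_some in E as [_ E]. apply fits_spec in E. apply pinj_cons; tauto. }
  set (P1 := add_requested r g k P) in *.
  set (P2 := if mem k (dom P1) then P1 else _).
  assert (H2 : pinj P2).
  { unfold P2. destruct (mem k (dom P1)) eqn:E; [exact H1|]. apply mem_nIn in E.
    apply pinj_cons; [exact H1|exact E|]. intro H.
    apply (fresh_not_in (ran P1 ++ map (fun j => r j k) (seq 0 (S k)))). apply in_or_app; auto. }
  destruct (mem k (ran P2)) eqn:E; [exact H2|]. apply mem_nIn in E. apply pinj_cons; auto.
  intro H. apply (fresh_not_in (dom P2 ++ map (fun j => ri j k) (seq 0 (S k)))).
  apply in_or_app; auto.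
Qed.

Lemma approx_pinj (k : nat) : pinj (approx r ri g k).
Proof.
  induction k as [|k IH]; [intros a b c d H; simpl in H; contradiction|apply step_pinj, IH].
Qed.

Lemma step_dom_ran (k : nat) (P : list (nat * nat)) :
  In k (dom (step r ri g k P)) /\ In k (ran (step r ri g k P)).
Proof.
  unfold step, add_range.
  set (P2 := add_domain r k (add_requested r g k P)).
  assert (In k (dom P2)).
  { unfold P2, add_domain. destruct (mem k _) eqn:E; [apply mem_In; exact E|simpl; auto]. }
  destruct (mem k (ran P2)) eqn:E.
  - split; [assumption|apply mem_In; exact E].
  - simpl. auto.
Qed.

Lemma approx_length (k : nat) : length (approx r ri g k) <= 3 * k.
Proof.
  induction k; simpl; [lia|].
  assert (length (step r ri g k (approx r ri g k)) <= 3 + length (approx r ri g k)).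
  { unfold step, add_range, add_domain, add_requested.
    destruct (find _ _); repeat (destruct (mem _ _)); simpl; lia. }
  lia.
Qed.

Lemma step_new (k : nat) (P : list (nat * nat)) (n m : nat) :
  In (n, m) (step r ri g k P) -> In (n, m) P \/ forall j, j <= k -> r j n <> m.
Proof.
  unfold step, add_range, add_domain.
  set (P1 := add_requested r g k P).
  assert (H1 : In (n, m) P1 -> In (n, m) P \/ forall j, j <= k -> r j n <> m).
  { unfold P1, add_requested. destruct (find _ _) as [c|] eqn:E; [|auto].
    intros [Ec|H]; [subst c|auto]. apply find_some in E as [_ E]. apply fits_spec in E. tauto. }
  set (P2 := if mem k (dom P1) then P1 else _).
  assert (H2 : In (n, m) P2 -> In (n, m) P \/ forall j, j <= k -> r j n <> m).
  { unfold P2. destruct (mem k (dom P1)); [exact H1|]. intros [H|H]; [|auto].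
    injection H as <- <-. right. intros j Hj E.
    assert (Hin : In (r j k) (ran P1 ++ map (fun i => r i k) (seq 0 (S k))))
      by (apply in_or_app; right; apply (in_map (fun i => r i k)), in_seq; lia).
    rewrite E in Hin. exact (fresh_not_in _ Hin). }
  destruct (mem k (ran P2)); [exact H2|]. intros [H|H]; [|auto].
  injection H as <- <-. right. intros j Hj E.
  assert (Hin : In (ri j k) (dom P2 ++ map (fun i => ri i k) (seq 0 (S k))))
    by (apply in_or_app; right; apply (in_map (fun i => ri i k)), in_seq; lia).
  assert (Ex : S (maxl (dom P2 ++ map (fun i => ri i k) (seq 0 (S k)))) = ri j k)
    by (apply (proj1 (Hr j)); rewrite (proj2 (Hr j)); exact E).
  rewrite <- Ex in Hin. exact (fresh_not_in _ Hin).
Qed.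

Lemma approx_avoid (k j n m : nat) :
  In (n, m) (approx r ri g k) -> r j n = m -> In (n, m) (approx r ri g j).
Proof.
  induction k; simpl; [tauto|]. intros H E.
  destruct (step_new k _ n m H) as [H'|H']; [auto|].
  destruct (Nat.le_gt_cases j k) as [Hj|Hj]; [exfalso; exact (H' j Hj E)|].
  apply approx_mono with (S k); [lia|exact H].
Qed.

Lemma diag_spec (k n m : nat) : In (n, m) (approx r ri g k) -> diag r ri g n = m.
Proof.
  intros H. unfold diag.
  destruct (step_dom_ran n (approx r ri g n)) as [D _].
  apply in_map_iff in D as [[n' m'] [E D]]. simpl in E; subst n'.
  change (In (n, m') (approx r ri g (S n))) in D.
  rewrite (lookup_spec n m' _ (approx_pinj (S n)) D).
  apply (approx_pinj (max k (S n)) n m' n m); [| |reflexivity].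
  - apply approx_mono with (S n); [lia|exact D].
  - apply approx_mono with k; [lia|exact H].
Qed.

Lemma diag_graph (n : nat) : In (n, diag r ri g n) (approx r ri g (S n)).
Proof.
  destruct (step_dom_ran n (approx r ri g n)) as [D _].
  apply in_map_iff in D as [[n' m] [E D]]. simpl in E; subst n'.
  change (In (n, m) (approx r ri g (S n))) in D. rewrite (diag_spec _ _ _ D). exact D.
Qed.

Lemma diag_perm : is_perm (diag r ri g).
Proof.
  split.
  - intros x y E.
    apply (approx_pinj (max (S x) (S y)) x (diag r ri g x) y (diag r ri g y)); [| |exact E];
      (eapply approx_mono; [|apply diag_graph]; lia).
  - intros y. destruct (step_dom_ran y (approx r ri g y)) as [_ D].
    apply in_map_iff in D as [[x y'] [E D]]. simpl in E; subst y'.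
    exists x. exact (diag_spec (S y) x y D).
Qed.

Lemma diag_ad (j : nat) : almost_disjoint (diag r ri g) (r j).
Proof.
  exists (S (maxl (dom (approx r ri g j)))). intros n Hn E.
  apply eq_sym, (approx_avoid _ j _ _ (diag_graph n)), in_dom, maxl_ge in E. lia.
Qed.

Lemma diag_meets (k : nat) :
  (exists c, In c (dec (g k)) /\ fits r k (approx r ri g k) c = true) ->
  exists n, k <= n /\ In (n, diag r ri g n) (dec (g k)).
Proof.
  intros [c [Hc Hfit]].
  destruct (find (fits r k (approx r ri g k)) (dec (g k))) as [[n m]|] eqn:E.
  - pose proof E as E'. apply find_some in E' as [Hin Hnm]. apply fits_spec in Hnm.
    exists n. split; [tauto|].
    assert (In (n, m) (approx r ri g (S k))).
    { simpl. apply step_incl_requested. unfold add_requested. rewrite E. left. reflexivity. }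
    rewrite (diag_spec _ _ _ H). exact Hin.
  - eapply find_none in E; [|exact Hc]. congruence.
Qed.

End Diagonal.

Definition inv (f : nat -> nat) (m : nat) : nat :=
  match excluded_middle_informative (exists x, f x = m) with
  | left H => proj1_sig (constructive_indefinite_description _ H)
  | right _ => 0
  end.

Lemma inv_spec (f : nat -> nat) (m : nat) : (exists x, f x = m) -> f (inv f m) = m.
Proof.
  intros H. unfold inv. destruct excluded_middle_informative; [|contradiction].
  destruct constructive_indefinite_description; assumption.
Qed.

Lemma inv_l (f : nat -> nat) (x : nat) : (forall a b, f a = f b -> a = b) -> inv f (f x) = x.
Proof. intros Hf. apply Hf, inv_spec. eauto. Qed.

Lemma perm_family_of (r : nat -> nat -> nat) :
  (forall j, is_perm (r j)) -> perm_family r (fun j => inv (r j)).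
Proof. intros H j. split; [apply H|]. intro m. apply inv_spec, H. Qed.

(* If a list [cs] of more than [2 |P|] points on the graph of an injection [Q], with
   distinct first coordinates, avoids the graphs of [r 0, ..., r k] beyond [k], then one
   of them fits [P] at stage [k]: each point of [P] blocks at most two of them. *)
Lemma fitting_pair_exists (r : nat -> nat -> nat) (k : nat) (P : list (nat * nat))
    (Q Qi : nat -> nat) (cs : list (nat * nat)) :
  (forall x, Qi (Q x) = x) ->
  (forall c, In c cs ->
     snd c = Q (fst c) /\ k <= fst c /\ forall j, j <= k -> r j (fst c) <> Q (fst c)) ->
  NoDup (map fst cs) -> 2 * length P < length cs ->
  exists c, In c cs /\ fits r k P c = true.
Proof.
  intros HQi Hcs Hnd Hlen. apply NNPP. intro Hnone.
  assert (Hincl : incl (map fst cs) (dom P ++ map Qi (ran P))).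
  { intros x Hx. apply in_map_iff in Hx as [[a b] [Ea Hc]]. simpl in Ea; subst x.
    destruct (Hcs _ Hc) as [Eb [Hk Hav]]. simpl in *. subst b.
    destruct (classic (In a (dom P))) as [D|D]; [apply in_or_app; auto|].
    destruct (classic (In (Q a) (ran P))) as [D'|D'].
    - apply in_or_app. right. rewrite <- (HQi a). apply in_map, D'.
    - exfalso. apply Hnone. exists (a, Q a). split; [exact Hc|]. apply fits_spec. tauto. }
  apply NoDup_incl_length in Hincl; [|exact Hnd].
  unfold dom, ran in Hincl. rewrite length_app, !length_map in Hincl. lia.
Qed.

Definition admissible (Q : nat -> nat) (R : nat -> nat -> nat) (k n : nat) : nat :=
  if avoidb R k n (Q n) then 1 else 0.

Lemma admissible_spec (Q : nat -> nat) (R : nat -> nat -> nat) (k n : nat) :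
  admissible Q R k n <> 0 <-> forall j, j <= k -> R j n <> Q n.
Proof. unfold admissible. rewrite <- avoidb_spec. destruct (avoidb _ _ _ _); intuition congruence. Qed.

Lemma eventually_admissible (Q : nat -> nat) (R : nat -> nat -> nat) :
  (forall j, almost_disjoint Q (R j)) ->
  forall k, exists N, forall n, N <= n -> admissible Q R k n <> 0.
Proof.
  intros HAD k. setoid_rewrite admissible_spec.
  induction k as [|k [N IH]].
  - destruct (HAD 0) as [N HN]. exists N. intros n Hn j Hj E.
    replace j with 0 in E by lia. exact (HN n Hn (eq_sym E)).
  - destruct (HAD (S k)) as [N' HN']. exists (max N N'). intros n Hn j Hj E.
    destruct (Nat.eq_dec j (S k)) as [->|Hne].
    + exact (HN' n ltac:(lia) (eq_sym E)).
    + exact (IH n ltac:(lia) j ltac:(lia) E).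
Qed.

Definition above (ok : nat -> nat) (a : nat) : nat := mu (fun n => if a <=? n then ok n else 0).

Lemma above_spec (ok : nat -> nat) (a : nat) :
  (exists N, forall n, N <= n -> ok n <> 0) -> a <= above ok a /\ ok (above ok a) <> 0.
Proof.
  intros [N HN]. unfold above. set (h := fun n => if a <=? n then ok n else 0).
  destruct (mu_spec h) as [Hval _].
  - exists (max a N). unfold h. replace (a <=? max a N) with true by (symmetry; apply Nat.leb_le; lia).
    apply HN. lia.
  - unfold h at 1 in Hval. destruct (Nat.leb_spec a (mu h)); [auto|contradiction].
Qed.

(* The increasing enumeration of the [k]-admissible points [n >= k], and the code of
   the graph of [Q] on its first [6k + 1] points: the value of the Borel map that the
   diamond principle guesses. *)
Fixpoint adm_seq (Q : nat -> nat) (R : nat -> nat -> nat) (k i : nat) : nat :=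
  match i with
  | 0 => above (admissible Q R k) k
  | S i => above (admissible Q R k) (S (adm_seq Q R k i))
  end.

Definition sample (Q : nat -> nat) (R : nat -> nat -> nat) (k : nat) : nat :=
  enc (map (fun i => (adm_seq Q R k i, Q (adm_seq Q R k i))) (seq 0 (S (6 * k)))).

Lemma adm_seq_spec (Q : nat -> nat) (R : nat -> nat -> nat) (k : nat) :
  (exists N, forall n, N <= n -> admissible Q R k n <> 0) ->
  (forall i, k <= adm_seq Q R k i /\ admissible Q R k (adm_seq Q R k i) <> 0) /\
  (forall i i', i < i' -> adm_seq Q R k i < adm_seq Q R k i').
Proof.
  intros Hev. split.
  - induction i as [|i IH]; simpl; [apply above_spec, Hev|].
    destruct (above_spec _ (S (adm_seq Q R k i)) Hev). split; [lia|assumption].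
  - induction 1 as [|i' _ IH]; simpl;
      [|pose proof (proj1 (above_spec _ (S (adm_seq Q R k i')) Hev)); simpl; lia].
    pose proof (proj1 (above_spec _ (S (adm_seq Q R k i)) Hev)). lia.
Qed.

Lemma diag_meets_sample (r ri : nat -> nat -> nat) (g Q : nat -> nat) (k : nat) :
  perm_family r ri -> is_perm Q -> (forall j, almost_disjoint Q (r j)) ->
  g k = sample Q r k -> exists n, k <= n /\ diag r ri g n = Q n.
Proof.
  intros Hr HQ HAD Hg.
  destruct (adm_seq_spec Q r k (eventually_admissible Q r HAD k)) as [Hadm Hinc].
  set (cs := map (fun i => (adm_seq Q r k i, Q (adm_seq Q r k i))) (seq 0 (S (6 * k)))).
  assert (Hdec : dec (g k) = cs) by (rewrite Hg; apply dec_enc).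
  destruct (diag_meets r ri g k) as [n [Hn Hin]].
  { rewrite Hdec. apply (fitting_pair_exists r k _ Q (inv Q) cs).
    - intro x. apply inv_l, HQ.
    - intros c Hc. apply in_map_iff in Hc as [i [<- _]]. simpl.
      destruct (Hadm i) as [Hk Ha]. rewrite admissible_spec in Ha. auto.
    - unfold cs. rewrite map_map. apply Injective_map_NoDup; [|apply seq_NoDup].
      intros a b E. simpl in E.
      destruct (Nat.lt_trichotomy a b) as [L|[L|L]]; [|exact L|]; apply Hinc in L; lia.
    - unfold cs. rewrite length_map, length_seq. pose proof (approx_length r ri g k). lia. }
  rewrite Hdec in Hin. apply in_map_iff in Hin as [i [E _]]. injection E as E1 E2.
  exists n. split; [exact Hn|]. rewrite <- E2, E1. reflexivity.
Qed.

Lemma meas_sample (I : Type) (Q : (I -> bool) -> nat -> nat)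
    (R : (I -> bool) -> nat -> nat -> nat) (k : nat) :
  (forall n, meas (fun s => Q s n)) -> (forall j n, meas (fun s => R s j n)) ->
  meas (fun s => sample (Q s) (R s) k).
Proof.
  intros HQ HR.
  assert (Hadm : forall n, meas (fun s => admissible (Q s) (R s) k n)).
  { intro n. apply (meas_forallb _ (fun j s => negb (R s j n =? Q s n))). intro j.
    apply (meas_ext _ (fun s => (fun a c => if a =? c then 0 else 1) (R s j n) (Q s n))).
    - apply (meas_fun2 _ (fun a c => if a =? c then 0 else 1)); [apply HR|apply HQ].
    - intro s. destruct (_ =? _); reflexivity. }
  assert (Habove : forall a, meas (fun s => above (admissible (Q s) (R s) k) a)).
  { intro a. apply (meas_mu _ (fun n s => if a <=? n then admissible (Q s) (R s) k n else 0)).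
    intro n. destruct (a <=? n); [apply Hadm|apply meas_const]. }
  assert (Hseq : forall i, meas (fun s => adm_seq (Q s) (R s) k i)).
  { induction i as [|i IH]; [apply Habove|].
    apply (meas_subst _ (fun a s => above (admissible (Q s) (R s) k) (S a)) _); [|exact IH].
    intro a. apply Habove. }
  apply (meas_enc _ (fun i s => adm_seq (Q s) (R s) k i) (fun i s => Q s (adm_seq (Q s) (R s) k i))).
  - exact Hseq.
  - intro i. apply (meas_subst _ (fun n s => Q s n)); [exact HQ|exact (Hseq i)].
Qed.

Lemma ad_sym (f g : nat -> nat) : almost_disjoint f g -> almost_disjoint g f.
Proof. intros [N H]. exists N. intros n Hn E. exact (H n Hn (eq_sym E)). Qed.

Lemma ad_irrefl (f : nat -> nat) : ~ almost_disjoint f f.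
Proof. intros [N H]. exact (H N (le_n N) eq_refl). Qed.

(* No countable almost disjoint family of permutations is maximal: the diagonal
   permutation of an enumeration of it is almost disjoint from all its members. *)
Lemma countable_not_mad (A : (nat -> nat) -> Prop) :
  mad_perm_family A -> ~ countable_type {p | A p}.
Proof.
  intros [[Hperm _] Hmax] [i Hi].
  set (r := fun j => match excluded_middle_informative (exists x, i x = j) with
            | left H => proj1_sig (proj1_sig (constructive_indefinite_description _ H))
            | right _ => fun n => n end).
  assert (Hr : forall j, is_perm (r j)).
  { intro j. unfold r. destruct excluded_middle_informative as [H|H].
    - destruct constructive_indefinite_description as [[x hx] E]. exact (Hperm x hx).
    - split; eauto. }
  assert (HrA : forall q (h : A q), r (i (exist _ q h)) = q).
  { intros q h. unfold r. destruct excluded_middle_informative as [H|H]; [|exfalso; eauto].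
    destruct constructive_indefinite_description as [x E]. simpl. apply Hi in E. subst x.
    reflexivity. }
  set (p := diag r (fun j => inv (r j)) (fun _ => 0)).
  apply Hmax. exists p. split; [|split].
  - apply diag_perm.
  - intro Ap. apply (ad_irrefl p).
    pose proof (diag_ad r _ (fun _ => 0) (perm_family_of r Hr) (i (exist _ p Ap))) as H.
    rewrite HrA in H. exact H.
  - intros q Aq. rewrite <- (HrA q Aq). apply diag_ad, perm_family_of, Hr.
Qed.

Section Omega1.
Variables (W : Type) (lt : W -> W -> Prop).
Hypothesis HW : is_omega1 W lt.

Lemma W_inhabited : exists w : W, True.
Proof.
  apply NNPP. intro H. apply (om_uncountable _ _ HW).
  exists (fun w => match H (ex_intro _ w I) with end). intros x. destruct (H (ex_intro _ x I)).
Qed.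

Definition base : W := proj1_sig (constructive_indefinite_description _ W_inhabited).

Lemma least_element (P : W -> Prop) :
  (exists w, P w) -> exists w, P w /\ forall y, lt y w -> ~ P y.
Proof.
  intros [w Hw]. induction w as [w IH] using (well_founded_induction (om_wf _ _ HW)).
  destruct (classic (exists y, lt y w /\ P y)) as [[y [Hyw Hy]]|Hnone].
  - exact (IH y Hyw Hy).
  - exists w. split; [exact Hw|]. intros y Hyw Hy. apply Hnone. eauto.
Qed.

Definition seg_code (d : W) : {i : {b | lt b d} -> nat | forall x y, i x = i y -> x = y} :=
  constructive_indefinite_description _ (om_segments_countable _ _ HW d).

Definition enum (d : W) (j : nat) : option {b | lt b d} :=
  match excluded_middle_informative (exists x, proj1_sig (seg_code d) x = j) with
  | left H => Some (proj1_sig (constructive_indefinite_description _ H))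
  | right _ => None
  end.

Lemma enum_spec (d b : W) (h : lt b d) : exists j, enum d j = Some (exist _ b h).
Proof.
  exists (proj1_sig (seg_code d) (exist _ b h)). unfold enum.
  destruct excluded_middle_informative as [E|E]; [|exfalso; eauto].
  f_equal. destruct constructive_indefinite_description as [x Hx]. simpl.
  exact (proj2_sig (seg_code d) _ _ Hx).
Qed.

(* Every countable subset of [W] is bounded: otherwise [W] would be a countable union
   of countable initial segments. *)
Lemma countable_bounded (x : nat -> W) : exists u, forall j, lt (x j) u.
Proof.
  apply NNPP. intros H.
  assert (Hcover : forall w, exists j, lt w (x j) \/ w = x j).
  { intro w. apply NNPP. intro H2. apply H. exists w. intro j.
    destruct (om_total _ _ HW (x j) w) as [E|[E|E]]; auto; exfalso; apply H2; eauto. }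
  apply (om_uncountable _ _ HW).
  destruct (choice _ Hcover) as [jf Hjf].
  exists (fun w => to_nat (jf w, match excluded_middle_informative (lt w (x (jf w))) with
            | left h => S (proj1_sig (seg_code (x (jf w))) (exist _ w h)) | right _ => 0 end)).
  intros a b E. apply to_nat_inj in E. injection E as E1 E2.
  destruct excluded_middle_informative as [ha|ha]; destruct excluded_middle_informative as [hb|hb];
    try discriminate.
  - injection E2 as E2. revert hb E2. rewrite <- E1. intros hb E2.
    apply (proj2_sig (seg_code (x (jf a)))) in E2. injection E2; auto.
  - destruct (Hjf a) as [Ha|Ha]; [contradiction|]. destruct (Hjf b) as [Hb|Hb]; [contradiction|].
    rewrite Ha, Hb, E1. reflexivity.
Qed.

Definition ub (x : nat -> W) : W :=
  proj1_sig (constructive_indefinite_description _ (countable_bounded x)).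

Lemma ub_spec (x : nat -> W) (j : nat) : lt (x j) (ub x).
Proof. unfold ub. destruct constructive_indefinite_description as [u Hu]. apply Hu. Qed.

Definition succ (w : W) : W := ub (fun _ => w).

Lemma succ_spec (w : W) : lt w (succ w).
Proof. exact (ub_spec (fun _ => w) 0). Qed.

Definition wrec {X : Type} (Phi : forall a, (forall b, lt b a -> X) -> X) : W -> X :=
  Fix (om_wf _ _ HW) (fun _ => X) Phi.

Lemma wrec_eq {X : Type} (Phi : forall a, (forall b, lt b a -> X) -> X) (a : W) :
  wrec Phi a = Phi a (fun b _ => wrec Phi b).
Proof.
  unfold wrec. rewrite Fix_eq; [reflexivity|].
  intros x f g Hfg. f_equal. apply functional_extensionality_dep. intro y.
  apply functional_extensionality_dep. intro p. apply Hfg.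
Qed.

(* An injection [code : W * nat -> W] with [code b j < code a i] whenever [b < a]:
   [code a i] is the [i]-th successor of a bound of all [code b j], [b < a]. *)
Definition code : W -> nat -> W :=
  wrec (fun a rec i => Nat.iter i succ (ub (fun n => let (x, j) := of_nat n in
     match enum a x with Some b => rec (proj1_sig b) (proj2_sig b) j | None => base end))).

Lemma iter_succ_lt (x : W) (i j : nat) : i < j -> lt (Nat.iter i succ x) (Nat.iter j succ x).
Proof.
  induction 1; simpl; [apply succ_spec|].
  eapply (om_trans _ _ HW); [eassumption|apply succ_spec].
Qed.

Lemma iter_succ_inj (x : W) (i j : nat) : Nat.iter i succ x = Nat.iter j succ x -> i = j.
Proof.
  intros E. destruct (Nat.lt_trichotomy i j) as [L|[L|L]]; [exfalso| |exfalso]; auto;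
    apply (iter_succ_lt x) in L; rewrite E in L; exact (om_irrefl _ _ HW _ L).
Qed.

Lemma code_below (a b : W) (i j : nat) : lt b a -> lt (code b j) (code a i).
Proof.
  intros h. unfold code at 2. rewrite wrec_eq.
  destruct (enum_spec a b h) as [x Ex].
  match goal with |- lt _ (Nat.iter i succ (ub ?F)) =>
    pose proof (ub_spec F (to_nat (x, j))) as U; set (u := ub F) in * end.
  cbv beta iota in U. rewrite cancel_of_to, Ex in U. simpl in U.
  destruct i as [|i]; [exact U|].
  eapply (om_trans _ _ HW); [exact U|apply (iter_succ_lt u 0); lia].
Qed.

Lemma code_inj (a b : W) (i j : nat) : code a i = code b j -> a = b /\ i = j.
Proof.
  intros E. destruct (om_total _ _ HW a b) as [h|[<-|h]].
  - exfalso. apply (om_irrefl _ _ HW (code a i)). rewrite E at 2. apply code_below, h.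
  - split; [reflexivity|]. unfold code in E. rewrite !wrec_eq in E. exact (iter_succ_inj _ _ _ E).
  - exfalso. apply (om_irrefl _ _ HW (code a i)). rewrite E at 1. apply code_below, h.
Qed.

Definition closed_under (h : W -> nat -> W) (w d : W) : Prop :=
  lt w d /\ forall a i, lt a d -> lt (h a i) d.

Definition closure_step (h : W -> nat -> W) (w c : W) : W :=
  ub (fun n => match n with
    | 0 => c
    | 1 => w
    | S (S n') => let (x, i) := of_nat n' in
        match x with
        | 0 => h c i
        | S x' => match enum c x' with Some b => h (proj1_sig b) i | None => w end
        end
    end).

Lemma closure_step_spec (h : W -> nat -> W) (w c : W) :
  lt c (closure_step h w c) /\ lt w (closure_step h w c) /\
  forall b i, lt b c \/ b = c -> lt (h b i) (closure_step h w c).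
Proof.
  unfold closure_step. match goal with |- context [ub ?F] => pose proof (ub_spec F) as U end.
  split; [exact (U 0)|split; [exact (U 1)|]]. intros b i [hb| ->].
  - destruct (enum_spec c b hb) as [x Ex]. specialize (U (S (S (to_nat (S x, i))))).
    cbv beta iota in U. rewrite cancel_of_to, Ex in U. exact U.
  - specialize (U (S (S (to_nat (0, i))))). cbv beta iota in U. rewrite cancel_of_to in U. exact U.
Qed.

Lemma closed_under_club (h : W -> nat -> W) (w : W) : club lt (closed_under h w).
Proof.
  split.
  - intros a [b0 hb0] H. split.
    + destruct (H b0 hb0) as [c [[Hc _] [_ Hca]]]. exact (om_trans _ _ HW _ _ _ Hc Hca).
    + intros x i hx. destruct (H x hx) as [c [[_ Hc] [Hxc Hca]]].
      exact (om_trans _ _ HW _ _ _ (Hc x i Hxc) Hca).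
  - intros a. set (A := fun j => Nat.iter j (closure_step h w) a).
    destruct (least_element (fun u => forall j, lt (A j) u) (countable_bounded A))
      as [d [Hd Hdmin]].
    exists d. split; [split|].
    + eapply (om_trans _ _ HW); [apply (closure_step_spec h w a)|]. apply (Hd 1).
    + intros x i hx. assert (exists j, ~ lt (A j) x) as [j Hj].
      { apply NNPP. intro Hn. apply (Hdmin x hx). intro j. apply NNPP. intro. apply Hn. eauto. }
      assert (lt x (A j) \/ x = A j).
      { destruct (om_total _ _ HW x (A j)) as [E|[E|E]]; auto; contradiction. }
      eapply (om_trans _ _ HW); [apply (closure_step_spec h w (A j)); assumption|].
      apply (Hd (S j)).
    + apply (Hd 0).
Qed.

Definition pick (d : W) (j : nat) : option {b | lt b d} :=
  match enum d j with
  | Some b => Some b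
  | None =>
      match excluded_middle_informative (exists b, lt b d) with
      | left H => let b := constructive_indefinite_description _ H in
                  Some (exist _ (proj1_sig b) (proj2_sig b))
      | right _ => None
      end
  end.

Lemma pick_all (d b : W) (h : lt b d) : exists j, pick d j = Some (exist _ b h).
Proof. destruct (enum_spec d b h) as [j E]. exists j. unfold pick. rewrite E. reflexivity. Qed.

Lemma pick_some (d : W) : (exists b, lt b d) -> forall j, exists b, pick d j = Some b.
Proof.
  intros H j. unfold pick. destruct (enum d j); [eauto|].
  destruct excluded_middle_informative; [eauto|contradiction].
Qed.

Definition bit (d : W) (s : {b | lt b d} -> bool) (x : W) : nat :=
  match excluded_middle_informative (lt x d) with
  | left h => if s (exist _ x h) then 1 else 0
  | right _ => 0
  end.

Definition decode (d : W) (s : {b | lt b d} -> bool) (x : nat -> nat -> W) (n : nat) : nat :=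
  mu (fun m => bit d s (x n m)).

Lemma decode_graph (d : W) (f : W -> bool) (x : nat -> nat -> W) (n v : nat) :
  (forall m, lt (x n m) d) -> (forall m, f (x n m) = true <-> v = m) ->
  decode d (fun b => f (proj1_sig b)) x n = v.
Proof.
  intros Hx Hf. unfold decode. rewrite <- (mu_indicator v). f_equal.
  apply functional_extensionality. intro m. unfold bit.
  destruct excluded_middle_informative as [h|h]; [simpl|contradiction (h (Hx m))].
  destruct (f (x n m)) eqn:E; destruct (Nat.eqb_spec v m) as [Em|Em]; try reflexivity.
  - exfalso. exact (Em (proj1 (Hf m) E)).
  - apply Hf in Em. congruence.
Qed.

(* Grids in [W]: the graph of the permutation attached to [a] is coded at the even
   positions of [code a], that of a candidate permutation at the odd ones of [code base]. *)
Definition grid_perm (a : W) (n m : nat) : W := code a (2 * to_nat (n, m)).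
Definition grid_cand (n m : nat) : W := code base (S (2 * to_nat (n, m))).

Lemma grid_perm_inj (a a' : W) (n n' m m' : nat) :
  grid_perm a n m = grid_perm a' n' m' -> a = a' /\ n = n' /\ m = m'.
Proof.
  intros E. apply code_inj in E as [-> E]. split; [reflexivity|].
  assert (Hnm : (n, m) = (n', m')) by (apply to_nat_inj; lia). injection Hnm. auto.
Qed.

Lemma grid_cand_inj (n n' m m' : nat) : grid_cand n m = grid_cand n' m' -> n = n' /\ m = m'.
Proof.
  intros E. apply code_inj in E as [_ E].
  assert (Hnm : (n, m) = (n', m')) by (apply to_nat_inj; lia). injection Hnm. auto.
Qed.

Lemma grid_perm_cand (a : W) (n m n' m' : nat) : grid_perm a n m <> grid_cand n' m'.
Proof. intros E. apply code_inj in E as [_ E]. lia. Qed.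

(* The Borel map to which the diamond principle is applied: from [s] of length [d] it
   decodes a candidate [Q] and the sequence [R] of permutations attached to the
   points below [d] (enumerated by [pick d]), and outputs [sample Q R]. *)
Definition cand_read (d : W) (s : {b | lt b d} -> bool) : nat -> nat := decode d s grid_cand.

Definition family_read (d : W) (s : {b | lt b d} -> bool) (j n : nat) : nat :=
  match pick d j with
  | Some b => decode d s (grid_perm (proj1_sig b)) n
  | None => n
  end.

Definition guess_map (d : W) (s : {b | lt b d} -> bool) : nat -> nat :=
  sample (cand_read d s) (family_read d s).

Lemma meas_decode (d : W) (x : nat -> nat -> W) (n : nat) : meas (fun s => decode d s x n).
Proof.
  apply (meas_mu _ (fun m s => bit d s (x n m))). intro m. unfold bit.
  destruct excluded_middle_informative; [apply meas_coord|apply meas_const].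
Qed.

Lemma guess_map_borel (d : W) : borel_fun (guess_map d).
Proof.
  apply meas_borel_fun. intro k. apply meas_sample.
  - intro n. apply meas_decode.
  - intros j n. unfold family_read. destruct (pick d j); [apply meas_decode|apply meas_const].
Qed.

Section DiamondConstruction.
Hypothesis HD : diamond_Baire_infeq W lt.

Lemma guess_exists : exists G : W -> nat -> nat, forall f : W -> bool,
  stationary lt (fun d => inf_eq (guess_map d (fun b => f (proj1_sig b))) (G d)).
Proof. apply HD, guess_map_borel. Qed.

Definition guess : W -> nat -> nat := proj1_sig (constructive_indefinite_description _ guess_exists).

Lemma guess_spec (f : W -> bool) :
  stationary lt (fun d => inf_eq (guess_map d (fun b => f (proj1_sig b))) (guess d)).
Proof. unfold guess. destruct constructive_indefinite_description as [G HG]. apply HG. Qed.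

Definition family_of (d : W) (p : forall b, lt b d -> nat -> nat) (j : nat) : nat -> nat :=
  match pick d j with Some b => p (proj1_sig b) (proj2_sig b) | None => fun n => n end.

Definition perm_at : W -> nat -> nat :=
  wrec (fun d rec => diag (family_of d rec) (fun j => inv (family_of d rec j)) (guess d)).

Definition below (d : W) : nat -> nat -> nat := family_of d (fun b _ => perm_at b).

Lemma perm_at_eq (d : W) : perm_at d = diag (below d) (fun j => inv (below d j)) (guess d).
Proof. unfold perm_at at 1. rewrite wrec_eq. reflexivity. Qed.

Lemma below_perm (d : W) (j : nat) : is_perm (below d j).
Proof.
  revert j. induction d as [d IH] using (well_founded_induction (om_wf _ _ HW)).
  intro j. unfold below, family_of. destruct (pick d j) as [[b h]|]; simpl; [|split; eauto].
  rewrite perm_at_eq. apply diag_perm.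
Qed.

Lemma perm_at_perm (d : W) : is_perm (perm_at d).
Proof. rewrite perm_at_eq. apply diag_perm. Qed.

Lemma perm_at_ad (d b : W) : lt b d -> almost_disjoint (perm_at d) (perm_at b).
Proof.
  intros h. destruct (pick_all d b h) as [j E].
  replace (perm_at b) with (below d j) by (unfold below, family_of; rewrite E; reflexivity).
  rewrite perm_at_eq. apply diag_ad, perm_family_of. intro i. apply below_perm.
Qed.

Lemma perm_at_inj (a b : W) : perm_at a = perm_at b -> a = b.
Proof.
  intros E. destruct (om_total _ _ HW a b) as [h|[h|h]]; [exfalso| |exfalso]; auto.
  - pose proof (perm_at_ad b a h) as H. rewrite E in H. exact (ad_irrefl _ H).
  - pose proof (perm_at_ad a b h) as H. rewrite E in H. exact (ad_irrefl _ H).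
Qed.

Lemma below_is_perm_at (d : W) : (exists b, lt b d) -> forall j, exists b, below d j = perm_at b.
Proof.
  intros H j. destruct (pick_some d H j) as [[b h] E].
  exists b. unfold below, family_of. rewrite E. reflexivity.
Qed.

Section Maximality.
Variable q : nat -> nat.
Hypothesis Hq : is_perm q.
Hypothesis Hq_ad : forall w, almost_disjoint q (perm_at w).

Definition graph_code (x : W) : bool :=
  if excluded_middle_informative
     ((exists a n m, x = grid_perm a n m /\ perm_at a n = m) \/
      (exists n m, x = grid_cand n m /\ q n = m)) then true else false.

Lemma graph_code_perm (a : W) (n m : nat) :
  graph_code (grid_perm a n m) = true <-> perm_at a n = m.
Proof.
  unfold graph_code. destruct excluded_middle_informative as [H|H]; split; intro E;
    try discriminate; try reflexivity.
  - destruct H as [[a' [n' [m' [E1 E2]]]]|[n' [m' [E1 _]]]].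
    + apply grid_perm_inj in E1 as [-> [-> ->]]. exact E2.
    + exfalso. exact (grid_perm_cand _ _ _ _ _ E1).
  - exfalso. apply H. left. eauto.
Qed.

Lemma graph_code_cand (n m : nat) : graph_code (grid_cand n m) = true <-> q n = m.
Proof.
  unfold graph_code. destruct excluded_middle_informative as [H|H]; split; intro E;
    try discriminate; try reflexivity.
  - destruct H as [[a' [n' [m' [E1 _]]]]|[n' [m' [E1 E2]]]].
    + exfalso. exact (grid_perm_cand _ _ _ _ _ (eq_sym E1)).
    + apply grid_cand_inj in E1 as [-> ->]. exact E2.
  - exfalso. apply H. right. eauto.
Qed.

Lemma read_at_closure_point (d : W) : closed_under code base d ->
  cand_read d (fun b => graph_code (proj1_sig b)) = q /\
  family_read d (fun b => graph_code (proj1_sig b)) = below d.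
Proof.
  intros [Hbase Hcl]. split.
  - apply functional_extensionality. intro n. apply decode_graph.
    + intro m. apply Hcl, Hbase.
    + intro m. rewrite graph_code_cand. split; congruence.
  - apply functional_extensionality. intro j. apply functional_extensionality. intro n.
    unfold family_read, below, family_of. destruct (pick d j) as [[b h]|]; [|reflexivity].
    apply decode_graph.
    + intro m. apply Hcl, h.
    + intro m. rewrite graph_code_perm. split; congruence.
Qed.

(* The diamond guess at some closure point [d] samples [q] correctly at some [k] beyond
   the point where [q] and [perm_at d] stop agreeing; but then [perm_at d] agrees with
   [q] at some [n >= k]. *)
Lemma no_extension : False.
Proof.
  destruct (guess_spec graph_code _ (closed_under_club code base)) as [d [Hd Hinf]].
  destruct (Hq_ad d) as [N HN].
  destruct (Hinf N) as [k [Hk Ek]].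
  destruct (read_at_closure_point d Hd) as [Hcand Hfamily].
  unfold guess_map in Ek. rewrite Hcand, Hfamily in Ek.
  destruct (diag_meets_sample (below d) (fun j => inv (below d j)) (guess d) q k)
    as [n [Hkn E]].
  - apply perm_family_of, below_perm.
  - exact Hq.
  - intro j. destruct (below_is_perm_at d (ex_intro _ base (proj1 Hd)) j) as [b ->]. apply Hq_ad.
  - symmetry. exact Ek.
  - rewrite <- perm_at_eq in E. exact (HN n ltac:(lia) (eq_sym E)).
Qed.

End Maximality.

Lemma diamond_mad_family : exists A, mad_perm_family A /\
  exists h : W -> (nat -> nat),
    (forall x y, h x = h y -> x = y) /\ (forall p, A p <-> exists w, h w = p).
Proof.
  exists (fun p => exists w, perm_at w = p). split.
  - split; [split|].
    + intros p [w <-]. apply perm_at_perm.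
    + intros p1 p2 [a <-] [b <-] Hne. destruct (om_total _ _ HW a b) as [h|[<-|h]].
      * apply ad_sym, perm_at_ad, h.
      * contradiction.
      * apply perm_at_ad, h.
    + intros [q [Hq [_ Hq_ad]]]. apply (no_extension q Hq). intro w. apply Hq_ad. eauto.
  - exists perm_at. split; [exact perm_at_inj|]. tauto.
Qed.

End DiamondConstruction.
End Omega1.

Theorem mainTheorem15 (W : Type) (lt : W -> W -> Prop) :
  is_omega1 W lt ->
  diamond_Baire_infeq W lt ->
  a_p_eq_aleph1 W.
Proof.
  intros HW HD. split.
  - exact (diamond_mad_family W lt HW HD).
  - exact countable_not_mad.
Qed.
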